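(* Let $T>0$, $\lambda_1,\lambda_2>0$, $p_{12},p_{21}\in[0,1]$, $r_1,r_2,h_1,h_2\ge0$ and $c_1,c_2\in\mathbb{R}$. For nonnegative integers $Q_1,Q_2$ define $$\pi^{(1)}(Q_1,Q_2)=\frac1T\Big[(r_1-c_1)Q_1+(r_2-c_2)Q_2-(r_1+h_1)E_{Q_1,Q_2}[n_1(T)]-(r_2+h_2)E_{Q_1,Q_2}[n_2(T)]\Big],$$ where $E_{Q_1,Q_2}$ denotes expectation for the inventory CTMC started at $(Q_1,Q_2)$. Then $\pi^{(1)}$ is submodular, i.e. for all integers $Q_1,Q_2\ge0$, $$\pi^{(1)}(Q_1+1,Q_2+1)-\pi^{(1)}(Q_1+1,Q_2)-\pi^{(1)}(Q_1,Q_2+1)+\pi^{(1)}(Q_1,Q_2)\le 0.$$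
   Context: Two products; customers wanting product $i$ arrive as independent Poisson processes of rate $\lambda_i$; a customer who wants product $i$ and finds it out of stock while product $j\ne i$ is in stock buys one unit of $j$ with probability $p_{ij}$ (otherwise the sale is lost). The inventory CTMC $\{(n_1(t),n_2(t))\}$ started at $(Q_1,Q_2)$ (no replenishment) has state space $\{0,\dots,Q_1\}\times\{0,\dots,Q_2\}$ and transition rates: from $(i_1,i_2)$ with $i_1,i_2\ge1$, to $(i_1-1,i_2)$ at rate $\lambda_1$ and to $(i_1,i_2-1)$ at rate $\lambda_2$; from $(i_1,0)$ with $i_1\ge 1$, to $(i_1-1,0)$ at rate $s_1=\lambda_1+\lambda_2p_{21}$; from $(0,i_2)$ with $i_2\ge1$, to $(0,i_2-1)$ at rate $s_2=\lambda_2+\lambda_1p_{12}$; $(0,0)$ is absorbing. $r_i,c_i,h_i$ are the retail price, unit purchase cost, and end-of-period holding cost of product $i$. *)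

From Stdlib Require Import Reals Lra Lia Arith ClassicalEpsilon Bool.
Open Scope R_scope.
Open Scope bool_scope.

(* A state of the inventory CTMC: (n1, n2). *)
Definition state := (nat * nat)%type.

(* The limit of a real sequence (chosen classically; meaningful when it converges). *)
Definition seq_lim (u : nat -> R) : R :=
  epsilon (inhabits 0%R) (fun l => Un_cv u l).

Definition box_sum (Q1 Q2 : nat) (f : state -> R) : R :=
  sum_f_R0 (fun a => sum_f_R0 (fun b => f (a, b)) Q2) Q1.

Definition out_rate (l1 l2 p12 p21 : R) (x : state) : R :=
  match x with
  | (S _, S _) => l1 + l2
  | (S _, O) => l1 + l2 * p21
  | (O, S _) => l2 + l1 * p12
  | (O, O) => 0
  end.

Definition gen (l1 l2 p12 p21 : R) (x y : state) : R :=
  let '(a, b) := x in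
  let '(c, d) := y in
  if Nat.eqb a c && Nat.eqb b d then - out_rate l1 l2 p12 p21 x
  else if Nat.eqb (S c) a && Nat.eqb b d then
    (if Nat.eqb b 0 then l1 + l2 * p21 else l1)
  else if Nat.eqb a c && Nat.eqb (S d) b then
    (if Nat.eqb a 0 then l2 + l1 * p12 else l2)
  else 0.

(* k-th power of the generator restricted to the state space
   {0..Q1} x {0..Q2} (which is closed under transitions). *)
Fixpoint gen_pow (l1 l2 p12 p21 : R) (Q1 Q2 : nat) (k : nat) (x y : state) : R :=
  match k with
  | O => if Nat.eqb (fst x) (fst y) && Nat.eqb (snd x) (snd y) then 1 else 0
  | S k' => box_sum Q1 Q2 (fun z => gen_pow l1 l2 p12 p21 Q1 Q2 k' x z *
                                      gen l1 l2 p12 p21 z y)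
  end.

Definition trans_prob (l1 l2 p12 p21 : R) (Q1 Q2 : nat) (t : R) (x y : state) : R :=
  seq_lim (fun n => sum_f_R0 (fun k => t ^ k / INR (fact k) *
                                        gen_pow l1 l2 p12 p21 Q1 Q2 k x y) n).

Definition E_n1 (l1 l2 p12 p21 : R) (Q1 Q2 : nat) (T : R) : R :=
  box_sum Q1 Q2 (fun y => trans_prob l1 l2 p12 p21 Q1 Q2 T (Q1, Q2) y * INR (fst y)).

Definition E_n2 (l1 l2 p12 p21 : R) (Q1 Q2 : nat) (T : R) : R :=
  box_sum Q1 Q2 (fun y => trans_prob l1 l2 p12 p21 Q1 Q2 T (Q1, Q2) y * INR (snd y)).

Definition pi1 (T l1 l2 p12 p21 r1 r2 c1 c2 h1 h2 : R) (Q1 Q2 : nat) : R :=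
  / T * ((r1 - c1) * INR Q1 + (r2 - c2) * INR Q2
         - (r1 + h1) * E_n1 l1 l2 p12 p21 Q1 Q2 T
         - (r2 + h2) * E_n2 l1 l2 p12 p21 Q1 Q2 T).

From Stdlib Require Import Reals Lra Lia Arith ClassicalEpsilon.
From Coquelicot Require Import Coquelicot.
Open Scope R_scope.

(* With L = l1 + l2 the generator of the inventory chain is G = L (K - I), where K
   is the kernel of the uniformized jump chain; hence
   E_Q[f(n(T))] = e^(-LT) sum_k (LT)^k / k! (K^k f)(Q).  The kernel K preserves
   the class of functions that vanish on the axis a = 0, are nondecreasing in a,
   supermodular, and convex along b = 0.  This class contains n1, so every K^k n1,
   and therefore E[n1(T)], is supermodular in the initial state; exchanging the two
   products gives the same for E[n2(T)].  The linear part of pi^(1) has zero mixed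
   difference and the expectations enter with nonpositive coefficients, so pi^(1)
   is submodular. *)

(** * Finite sums *)

Lemma sum_f_R0_zero (F : nat -> R) (n : nat) :
  (forall k, (k <= n)%nat -> F k = 0) -> sum_f_R0 F n = 0.
Proof.
  intros H. rewrite (sum_eq _ (fun _ => 0)) by exact H. rewrite sum_cte. ring.
Qed.

Lemma sum_f_R0_single (F : nat -> R) (i n : nat) :
  (i <= n)%nat -> (forall k, (k <= n)%nat -> k <> i -> F k = 0) ->
  sum_f_R0 F n = F i.
Proof.
  induction n as [|n IH]; intros Hi H.
  - replace i with 0%nat by lia. reflexivity.
  - simpl. destruct (Nat.eq_dec i (S n)) as [->|Hne].
    + rewrite sum_f_R0_zero by (intros k Hk; apply H; lia). ring.
    + rewrite IH, (H (S n)) by (lia || (intros k Hk Hki; apply H; lia)). ring.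
Qed.

Lemma sum_f_R0_pair (F : nat -> R) (i j n : nat) :
  (i < j)%nat -> (j <= n)%nat ->
  (forall k, (k <= n)%nat -> k <> i -> k <> j -> F k = 0) ->
  sum_f_R0 F n = F i + F j.
Proof.
  induction n as [|n IH]; intros Hij Hj H; [lia|].
  simpl. destruct (Nat.eq_dec j (S n)) as [->|Hne].
  - rewrite (sum_f_R0_single F i) by (lia || (intros k Hk Hki; apply H; lia)).
    reflexivity.
  - rewrite IH, (H (S n)) by (lia || (intros k Hk Hki Hkj; apply H; lia)). ring.
Qed.

Lemma sum_f_R0_mult_l (c : R) (F : nat -> R) (n : nat) :
  sum_f_R0 (fun i => c * F i) n = c * sum_f_R0 F n.
Proof. rewrite scal_sum. apply sum_eq. intros. ring. Qed.

Lemma sum_f_R0_swap (F : nat -> nat -> R) (n m : nat) :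
  sum_f_R0 (fun i => sum_f_R0 (fun j => F i j) m) n =
  sum_f_R0 (fun j => sum_f_R0 (fun i => F i j) n) m.
Proof.
  induction n as [|n IH]; simpl; [reflexivity|].
  rewrite IH, <- sum_plus. reflexivity.
Qed.

Lemma sum_f_R0_Rabs_le (F : nat -> R) (C : R) (n : nat) :
  (forall i, (i <= n)%nat -> Rabs (F i) <= C) ->
  Rabs (sum_f_R0 F n) <= INR (S n) * C.
Proof.
  intros H. eapply Rle_trans; [apply Rabs_triang_gen|].
  rewrite Rmult_comm, <- sum_cte. apply sum_Rle. exact H.
Qed.

Lemma box_sum_ext (Q1 Q2 : nat) (f g : state -> R) :
  (forall a b, (a <= Q1)%nat -> (b <= Q2)%nat -> f (a, b) = g (a, b)) ->
  box_sum Q1 Q2 f = box_sum Q1 Q2 g.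
Proof.
  intros H. apply sum_eq. intros a Ha. apply sum_eq. intros b Hb. apply H; assumption.
Qed.

Lemma box_sum_mult_l (Q1 Q2 : nat) (c : R) (f : state -> R) :
  box_sum Q1 Q2 (fun y => c * f y) = c * box_sum Q1 Q2 f.
Proof.
  unfold box_sum. rewrite <- sum_f_R0_mult_l. apply sum_eq. intros. apply sum_f_R0_mult_l.
Qed.

Lemma box_sum_mult_r (Q1 Q2 : nat) (c : R) (f : state -> R) :
  box_sum Q1 Q2 f * c = box_sum Q1 Q2 (fun y => f y * c).
Proof.
  rewrite Rmult_comm, <- box_sum_mult_l. apply box_sum_ext. intros. ring.
Qed.

Lemma box_sum_swap (Q1 Q2 : nat) (F : state -> state -> R) :
  box_sum Q1 Q2 (fun y => box_sum Q1 Q2 (fun z => F z y)) =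
  box_sum Q1 Q2 (fun z => box_sum Q1 Q2 (fun y => F z y)).
Proof.
  unfold box_sum.
  rewrite (sum_eq _ (fun c => sum_f_R0 (fun a => sum_f_R0 (fun d =>
             sum_f_R0 (fun b => F (a, b) (c, d)) Q2) Q2) Q1))
    by (intros; apply (sum_f_R0_swap (fun d a => _))).
  rewrite sum_f_R0_swap. apply sum_eq. intros a _.
  rewrite (sum_eq _ (fun c => sum_f_R0 (fun b => sum_f_R0 (fun d =>
             F (a, b) (c, d)) Q2) Q2))
    by (intros; apply (sum_f_R0_swap (fun d b => _))).
  apply sum_f_R0_swap.
Qed.

Lemma box_sum_Rabs_le (Q1 Q2 : nat) (f : state -> R) (C : R) :
  (forall a b, (a <= Q1)%nat -> (b <= Q2)%nat -> Rabs (f (a, b)) <= C) ->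
  Rabs (box_sum Q1 Q2 f) <= INR (S Q1) * (INR (S Q2) * C).
Proof.
  intros H. apply sum_f_R0_Rabs_le. intros a Ha.
  apply sum_f_R0_Rabs_le. intros b Hb. auto.
Qed.

(** * The generator as an operator on functions *)

Definition gen_op (l1 l2 p12 p21 : R) (v : state -> R) (x : state) : R :=
  match x with
  | (S a, S b) => l1 * (v (a, S b) - v (S a, S b)) + l2 * (v (S a, b) - v (S a, S b))
  | (S a, O) => (l1 + l2 * p21) * (v (a, O) - v (S a, O))
  | (O, S b) => (l2 + l1 * p12) * (v (O, b) - v (O, S b))
  | (O, O) => 0
  end.

Lemma gen_op_ext (l1 l2 p12 p21 : R) (v w : state -> R) (x : state) :
  (forall y, v y = w y) -> gen_op l1 l2 p12 p21 v x = gen_op l1 l2 p12 p21 w x.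
Proof. intros H. destruct x as [[|a] [|b]]; simpl; rewrite ?H; reflexivity. Qed.

Ltac decide_gen :=
  unfold gen;
  repeat match goal with
  | |- context [Nat.eqb ?x ?y] => destruct (Nat.eqb_spec x y); try (exfalso; lia)
  end; cbn [andb out_rate gen_op]; try ring.

(* The box is closed under the (downward) transitions, so no rate is lost by
   restricting [gen] to it. *)
Lemma box_sum_gen_mul (l1 l2 p12 p21 : R) (Q1 Q2 a b : nat) (v : state -> R) :
  (a <= Q1)%nat -> (b <= Q2)%nat ->
  box_sum Q1 Q2 (fun y => gen l1 l2 p12 p21 (a, b) y * v y) = gen_op l1 l2 p12 p21 v (a, b).
Proof.
  intros Ha Hb. unfold box_sum.
  destruct a as [|a].
  - rewrite (sum_f_R0_single _ 0) by
      (lia || (intros k Hk Hk'; apply sum_f_R0_zero; intros; decide_gen)).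
    destruct b as [|b].
    + rewrite (sum_f_R0_single _ 0) by (lia || (intros k Hk Hk'; decide_gen)). decide_gen.
    + rewrite (sum_f_R0_pair _ b (S b)) by (lia || (intros k Hk Hk' Hk''; decide_gen)).
      decide_gen.
  - rewrite (sum_f_R0_pair _ a (S a)) by
      (lia || (intros k Hk Hk' Hk''; apply sum_f_R0_zero; intros; decide_gen)).
    destruct b as [|b].
    + rewrite !(sum_f_R0_single _ 0) by (lia || (intros k Hk Hk'; decide_gen)). decide_gen.
    + rewrite (sum_f_R0_single _ (S b)), (sum_f_R0_pair _ b (S b))
        by (lia || (intros k Hk Hk'; try intros Hk''; decide_gen)).
      decide_gen.
Qed.

Definition gen_op_pow (l1 l2 p12 p21 : R) (k : nat) : (state -> R) -> state -> R :=
  Nat.iter k (gen_op l1 l2 p12 p21).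

Lemma box_sum_gen_pow_mul (l1 l2 p12 p21 : R) (Q1 Q2 k a b : nat) (v : state -> R) :
  (a <= Q1)%nat -> (b <= Q2)%nat ->
  box_sum Q1 Q2 (fun y => gen_pow l1 l2 p12 p21 Q1 Q2 k (a, b) y * v y) =
  gen_op_pow l1 l2 p12 p21 k v (a, b).
Proof.
  revert v. induction k as [|k IH]; intros v Ha Hb.
  - unfold box_sum. cbn [gen_pow fst snd].
    rewrite (sum_f_R0_single _ a) by (lia || (intros c Hc Hca; apply sum_f_R0_zero;
      intros; destruct (Nat.eqb_spec a c); [lia|simpl; ring])).
    rewrite (sum_f_R0_single _ b) by (lia || (intros d Hd Hdb;
      destruct (Nat.eqb_spec b d); [lia|rewrite Nat.eqb_refl; simpl; ring])).
    rewrite !Nat.eqb_refl. simpl. ring.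
  - unfold gen_op_pow. rewrite Nat.iter_succ_r. fold (gen_op_pow l1 l2 p12 p21 k).
    rewrite <- IH by assumption. cbn [gen_pow].
    transitivity (box_sum Q1 Q2 (fun y => box_sum Q1 Q2 (fun z =>
       gen_pow l1 l2 p12 p21 Q1 Q2 k (a, b) z * (gen l1 l2 p12 p21 z y * v y)))).
    + apply box_sum_ext. intros. rewrite box_sum_mult_r.
      apply box_sum_ext. intros. ring.
    + rewrite box_sum_swap. apply box_sum_ext. intros c d Hc Hd.
      rewrite box_sum_mult_l, box_sum_gen_mul by assumption. reflexivity.
Qed.

Section Rates.
Variables l1 l2 p12 p21 : R.
Hypotheses (hl1 : 0 < l1) (hl2 : 0 < l2) (hp12 : 0 <= p12 <= 1) (hp21 : 0 <= p21 <= 1).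

Lemma Rabs_gen_le (x y : state) : Rabs (gen l1 l2 p12 p21 x y) <= l1 + l2.
Proof.
  destruct x as [a b], y as [c d].
  assert (0 <= l2 * p21 <= l2) by nra. assert (0 <= l1 * p12 <= l1) by nra.
  unfold gen.
  repeat match goal with
  | |- context [Nat.eqb ?x ?y] => destruct (Nat.eqb_spec x y)
  end; cbn [andb]; try (destruct a, b; cbn [out_rate]);
  rewrite ?Rabs_Ropp, ?Rabs_R0, ?Rabs_right by lra; lra.
Qed.

Lemma Rabs_gen_pow_le (Q1 Q2 k : nat) (x y : state) :
  Rabs (gen_pow l1 l2 p12 p21 Q1 Q2 k x y) <=
  (INR (S Q1) * (INR (S Q2) * (l1 + l2))) ^ k.
Proof.
  revert y. induction k as [|k IH]; intros y.
  - simpl. destruct (_ && _); rewrite ?Rabs_R1, ?Rabs_R0; lra.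
  - cbn [gen_pow]. set (B := INR (S Q1) * (INR (S Q2) * (l1 + l2))) in *.
    eapply Rle_trans.
    + apply (box_sum_Rabs_le _ _ _ (B ^ k * (l1 + l2))). intros a b _ _.
      rewrite Rabs_mult. apply Rmult_le_compat; try apply Rabs_pos; auto.
      apply Rabs_gen_le.
    + right. unfold B. simpl. ring.
Qed.

End Rates.

(** * Uniformization *)

(* One step of the uniformized chain: a type-1 (resp. type-2) customer arrives
   with probability [al] (resp. [be]); a customer whose sale is lost leaves the
   state unchanged, which gives the self-loops on the axes. *)
Definition jump_kernel (al be p12 p21 : R) (v : state -> R) (x : state) : R :=
  match x with
  | (S a, S b) => al * v (a, S b) + be * v (S a, b)
  | (S a, O) => (al + be * p21) * v (a, O) + (be - be * p21) * v (S a, O)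
  | (O, S b) => (be + al * p12) * v (O, b) + (al - al * p12) * v (O, S b)
  | (O, O) => v (O, O)
  end.

Lemma jump_kernel_ext (al be p12 p21 : R) (v w : state -> R) (x : state) :
  (forall y, v y = w y) -> jump_kernel al be p12 p21 v x = jump_kernel al be p12 p21 w x.
Proof. intros H. destruct x as [[|a] [|b]]; simpl; rewrite ?H; reflexivity. Qed.

Lemma jump_kernel_plus (al be p12 p21 : R) (v w : state -> R) (x : state) :
  jump_kernel al be p12 p21 (fun y => v y + w y) x =
  jump_kernel al be p12 p21 v x + jump_kernel al be p12 p21 w x.
Proof. destruct x as [[|a] [|b]]; simpl; ring. Qed.

Lemma jump_kernel_scal (al be p12 p21 c : R) (v : state -> R) (x : state) :
  jump_kernel al be p12 p21 (fun y => c * v y) x = c * jump_kernel al be p12 p21 v x.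
Proof. destruct x as [[|a] [|b]]; simpl; ring. Qed.

Lemma jump_kernel_sum (al be p12 p21 : R) (c : nat -> R) (g : nat -> state -> R)
    (n : nat) (x : state) :
  jump_kernel al be p12 p21 (fun y => sum_f_R0 (fun k => c k * g k y) n) x =
  sum_f_R0 (fun k => c k * jump_kernel al be p12 p21 (g k) x) n.
Proof.
  induction n as [|n IH]; simpl.
  - apply jump_kernel_scal.
  - rewrite (jump_kernel_plus _ _ _ _ (fun y => sum_f_R0 _ n)), jump_kernel_scal, IH.
    reflexivity.
Qed.

(* [unif_coef L n k] is the coefficient of K^k in (L K - L)^n / n!. *)
Definition unif_coef (L : R) (n k : nat) : R :=
  L ^ k / INR (fact k) * ((- L) ^ (n - k) / INR (fact (n - k))).

Lemma unif_coef_sub (L : R) (n k : nat) : (k <= n)%nat ->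
  INR (S n - k) * unif_coef L (S n) k = - L * unif_coef L n k.
Proof.
  intros Hk. unfold unif_coef. replace (S n - k)%nat with (S (n - k)) by lia.
  rewrite fact_simpl, mult_INR. simpl pow.
  pose proof (INR_fact_neq_0 (n - k)). pose proof (INR_fact_neq_0 k).
  assert (INR (S (n - k)) <> 0) by (apply not_0_INR; lia).
  field. auto.
Qed.

Lemma unif_coef_succ (L : R) (n k : nat) :
  INR (S k) * unif_coef L (S n) (S k) = L * unif_coef L n k.
Proof.
  unfold unif_coef. cbn [Nat.sub]. rewrite fact_simpl, mult_INR. simpl pow.
  pose proof (INR_fact_neq_0 (n - k)). pose proof (INR_fact_neq_0 k).
  assert (INR (S k) <> 0) by (apply not_0_INR; lia).
  field. auto.
Qed.

Lemma unif_coef_sum_succ (L : R) (s : nat -> R) (n : nat) :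
  INR (S n) * sum_f_R0 (fun k => unif_coef L (S n) k * s k) (S n) =
  L * sum_f_R0 (fun k => unif_coef L n k * s (S k)) n -
  L * sum_f_R0 (fun k => unif_coef L n k * s k) n.
Proof.
  (* split the factor [S n] as [(S n - k) + k] *)
  rewrite <- sum_f_R0_mult_l.
  rewrite (sum_eq _ (fun k => INR (S n - k) * unif_coef L (S n) k * s k +
                              INR k * unif_coef L (S n) k * s k)).
  2:{ intros k Hk. rewrite <- Rmult_plus_distr_r, <- Rmult_plus_distr_r, <- plus_INR.
      replace (S n - k + k)%nat with (S n) by lia. ring. }
  rewrite sum_plus, (tech5 (fun k => INR (S n - k) * _ * _)).
  rewrite (decomp_sum (fun k => INR k * _ * _)) by lia.
  rewrite Nat.sub_diag. simpl pred. change (INR 0) with 0.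
  rewrite <- !sum_f_R0_mult_l.
  rewrite (sum_eq (fun k => INR (S n - k) * _ * _) (fun k => - L * (unif_coef L n k * s k)))
    by (intros k Hk; rewrite unif_coef_sub by assumption; ring).
  rewrite (sum_eq (fun k => INR (S k) * _ * _) (fun k => L * (unif_coef L n k * s (S k))))
    by (intros k Hk; rewrite unif_coef_succ; ring).
  rewrite !sum_f_R0_mult_l. ring.
Qed.

Notation unif_kernel l1 l2 p12 p21 :=
  (jump_kernel (l1 / (l1 + l2)) (l2 / (l1 + l2)) p12 p21).

Section Uniformization.
Variables l1 l2 p12 p21 : R.
Hypothesis hL : l1 + l2 <> 0.

Lemma gen_op_unif (v : state -> R) (x : state) :
  gen_op l1 l2 p12 p21 v x = (l1 + l2) * (unif_kernel l1 l2 p12 p21 v x - v x).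
Proof. destruct x as [[|a] [|b]]; simpl; field; exact hL. Qed.

Lemma gen_op_pow_unif (n : nat) (f : state -> R) (x : state) :
  gen_op_pow l1 l2 p12 p21 n f x =
  INR (fact n) *
  sum_f_R0 (fun k => unif_coef (l1 + l2) n k * Nat.iter k (unif_kernel l1 l2 p12 p21) f x) n.
Proof.
  revert x. induction n as [|n IH]; intros x.
  - unfold unif_coef. simpl. field.
  - unfold gen_op_pow. simpl Nat.iter. fold (gen_op_pow l1 l2 p12 p21 n).
    rewrite (gen_op_ext _ _ _ _ _ _ _ IH), gen_op_unif, fact_simpl, mult_INR.
    rewrite (Rmult_comm (INR (S n))), Rmult_assoc, unif_coef_sum_succ.
    rewrite jump_kernel_scal,
      (jump_kernel_sum _ _ _ _ _ (fun k => Nat.iter k (unif_kernel l1 l2 p12 p21) f)).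
    simpl Nat.iter. ring.
Qed.
End Uniformization.

(** * Expectations as exponential series *)

Lemma seq_lim_Series (a : nat -> R) :
  ex_series a -> seq_lim (fun n => sum_f_R0 a n) = Series a.
Proof.
  intros Ha. assert (H := Series_correct a Ha). apply is_series_Reals in H.
  unfold seq_lim. apply (UL_sequence (fun n => sum_f_R0 a n)); [|exact H].
  apply epsilon_spec. exists (Series a). exact H.
Qed.

Lemma is_series_exp (z : R) : is_series (fun n => z ^ n / INR (fact n)) (exp z).
Proof.
  eapply is_series_ext; [|apply (is_exp_Reals z)].
  intros n. simpl. rewrite pow_n_pow. unfold scal; simpl. unfold mult; simpl.
  unfold Rdiv. ring.
Qed.

Lemma exp_coef_nonneg (z : R) (k : nat) : 0 <= z -> 0 <= z ^ k / INR (fact k).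
Proof.
  intros. unfold Rdiv. apply Rmult_le_pos; [apply pow_le; assumption|].
  left. apply Rinv_0_lt_compat, INR_fact_lt_0.
Qed.

Lemma ex_series_exp_bounded (z C : R) (a : nat -> R) : 0 <= z ->
  (forall k, Rabs (a k) <= C) ->
  ex_series (fun k => Rabs (z ^ k / INR (fact k) * a k)).
Proof.
  intros hz H.
  apply (@ex_series_le R_AbsRing R_CompleteNormedModule _
           (fun k => z ^ k / INR (fact k) * C)).
  - intros k. change (norm ?x) with (Rabs x).
    rewrite Rabs_Rabsolu, Rabs_mult, (Rabs_right (z ^ k / _))
      by (apply Rle_ge, exp_coef_nonneg; assumption).
    apply Rmult_le_compat_l; [apply exp_coef_nonneg; assumption|apply H].
  - exists (exp z * C). apply is_series_scal_r, is_series_exp.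
Qed.

Lemma sum_f_R0_is_series (g : nat -> nat -> R) (l : nat -> R) (n : nat) :
  (forall i, (i <= n)%nat -> is_series (g i) (l i)) ->
  is_series (fun k => sum_f_R0 (fun i => g i k) n) (sum_f_R0 l n).
Proof.
  induction n as [|n IH]; intros H; simpl.
  - apply H. lia.
  - apply (is_series_plus (fun k => sum_f_R0 (fun i => g i k) n) (g (S n))).
    + apply IH. intros. apply H. lia.
    + apply H. lia.
Qed.

Lemma box_sum_is_series (Q1 Q2 : nat) (g : state -> nat -> R) (l : state -> R) :
  (forall a b, (a <= Q1)%nat -> (b <= Q2)%nat -> is_series (g (a, b)) (l (a, b))) ->
  is_series (fun k => box_sum Q1 Q2 (fun y => g y k)) (box_sum Q1 Q2 l).
Proof.
  intros H. apply (sum_f_R0_is_series (fun a k => sum_f_R0 (fun b => g (a, b) k) Q2)).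
  intros a Ha. apply (sum_f_R0_is_series (fun b k => g (a, b) k)). auto.
Qed.

Definition unif_series (l1 l2 p12 p21 T : R) (f : state -> R) (x : state) : R :=
  Series (fun k => ((l1 + l2) * T) ^ k / INR (fact k) *
                   Nat.iter k (unif_kernel l1 l2 p12 p21) f x).

Section Expectation.
Variables l1 l2 p12 p21 T : R.
Hypotheses (hl1 : 0 < l1) (hl2 : 0 < l2) (hp12 : 0 <= p12 <= 1) (hp21 : 0 <= p21 <= 1)
  (hT : 0 <= T).

Lemma trans_prob_is_series (Q1 Q2 : nat) (x y : state) :
  is_series (fun k => T ^ k / INR (fact k) * gen_pow l1 l2 p12 p21 Q1 Q2 k x y)
            (trans_prob l1 l2 p12 p21 Q1 Q2 T x y).
Proof.
  set (B := INR (S Q1) * (INR (S Q2) * (l1 + l2))).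
  assert (hB : 0 <= B).
  { unfold B. pose proof (pos_INR (S Q1)). pose proof (pos_INR (S Q2)).
    apply Rmult_le_pos; [|apply Rmult_le_pos]; lra. }
  assert (Hex : ex_series (fun k => T ^ k / INR (fact k) * gen_pow l1 l2 p12 p21 Q1 Q2 k x y)).
  { apply ex_series_Rabs.
    apply (@ex_series_le R_AbsRing R_CompleteNormedModule _
             (fun k => (T * B) ^ k / INR (fact k))).
    - intros k. change (norm ?z) with (Rabs z).
      rewrite Rabs_Rabsolu, Rabs_mult, (Rabs_right (_ / INR (fact k)))
        by (apply Rle_ge, exp_coef_nonneg; assumption).
      replace ((T * B) ^ k / INR (fact k)) with (T ^ k / INR (fact k) * B ^ k)
        by (rewrite Rpow_mult_distr; field; apply INR_fact_neq_0).
      apply Rmult_le_compat_l; [apply exp_coef_nonneg; assumption|].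
      apply Rabs_gen_pow_le; assumption.
    - exists (exp (T * B)). apply is_series_exp. }
  unfold trans_prob. rewrite seq_lim_Series by exact Hex. apply Series_correct, Hex.
Qed.

Lemma box_expectation_is_series (Q1 Q2 : nat) (v : state -> R) :
  is_series (fun k => T ^ k / INR (fact k) * gen_op_pow l1 l2 p12 p21 k v (Q1, Q2))
            (box_sum Q1 Q2 (fun y => trans_prob l1 l2 p12 p21 Q1 Q2 T (Q1, Q2) y * v y)).
Proof.
  eapply is_series_ext; [|apply (box_sum_is_series Q1 Q2
     (fun y k => T ^ k / INR (fact k) * gen_pow l1 l2 p12 p21 Q1 Q2 k (Q1, Q2) y * v y))].
  - intros k. cbv beta.
    rewrite <- (box_sum_gen_pow_mul _ _ _ _ Q1 Q2 k Q1 Q2) by lia.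
    rewrite <- box_sum_mult_l.
    apply box_sum_ext. intros. ring.
  - intros a b _ _. apply is_series_scal_r, trans_prob_is_series.
Qed.

Lemma gen_op_pow_is_series (f : state -> R) (x : state) (C : R) :
  (forall k, Rabs (Nat.iter k (unif_kernel l1 l2 p12 p21) f x) <= C) ->
  is_series (fun n => T ^ n / INR (fact n) * gen_op_pow l1 l2 p12 p21 n f x)
            (exp (- ((l1 + l2) * T)) * unif_series l1 l2 p12 p21 T f x).
Proof.
  intros HC.
  set (L := l1 + l2).
  assert (hLT : 0 <= L * T) by (unfold L; nra).
  set (A := fun k => (L * T) ^ k / INR (fact k) * Nat.iter k (unif_kernel l1 l2 p12 p21) f x).
  set (B := fun j => (- (L * T)) ^ j / INR (fact j)).
  assert (exA : ex_series (fun k => Rabs (A k))) by (apply (ex_series_exp_bounded _ C); auto).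
  assert (exB : ex_series (fun k => Rabs (B k))).
  { exists (exp (L * T)). eapply is_series_ext; [|apply is_series_exp].
    intros k. unfold B, Rdiv.
    rewrite Rabs_mult, <- RPow_abs, Rabs_Ropp, (Rabs_right (L * T)) by lra.
    rewrite Rabs_right; [reflexivity|].
    apply Rle_ge. left. apply Rinv_0_lt_compat, INR_fact_lt_0. }
  (* Cauchy product of the uniformized series with the series of e^(-LT) *)
  rewrite Rmult_comm. unfold unif_series. fold L. fold A.
  eapply is_series_ext; [|exact (is_series_mult A B _ _
     (Series_correct _ (ex_series_Rabs _ exA)) (is_series_exp _) exA exB)].
  intros n. cbv beta. rewrite gen_op_pow_unif by (unfold L; lra).
  rewrite <- Rmult_assoc.
  replace (T ^ n / INR (fact n) * INR (fact n)) with (T ^ n)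
    by (field; apply INR_fact_neq_0).
  rewrite <- sum_f_R0_mult_l. apply sum_eq. intros k Hk. unfold A, B, unif_coef. fold L.
  replace (T ^ n) with (T ^ k * T ^ (n - k)) by (rewrite <- pow_add; f_equal; lia).
  replace (- (L * T)) with (- L * T) by ring.
  rewrite !Rpow_mult_distr. field. split; apply INR_fact_neq_0.
Qed.

Lemma box_expectation_unif (Q1 Q2 : nat) (f : state -> R) (C : R) :
  (forall k, Rabs (Nat.iter k (unif_kernel l1 l2 p12 p21) f (Q1, Q2)) <= C) ->
  box_sum Q1 Q2 (fun y => trans_prob l1 l2 p12 p21 Q1 Q2 T (Q1, Q2) y * f y) =
  exp (- ((l1 + l2) * T)) * unif_series l1 l2 p12 p21 T f (Q1, Q2).
Proof.
  intros HC. rewrite <- (is_series_unique _ _ (box_expectation_is_series Q1 Q2 f)).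
  apply is_series_unique, (gen_op_pow_is_series f _ C HC).
Qed.

End Expectation.

(** * An invariant cone of supermodular functions *)

Definition mixed_diff (u : state -> R) (a b : nat) : R :=
  u (S a, S b) - u (S a, b) - u (a, S b) + u (a, b).

Lemma mixed_diff_swap (u : state -> R) (a b : nat) :
  mixed_diff (fun x => u (snd x, fst x)) a b = mixed_diff u b a.
Proof. unfold mixed_diff. simpl. ring. Qed.

(* The conditions on the axis [a = 0] and along the edge [b = 0] are what makes
   this class invariant under [jump_kernel]. *)
Record monotone_supermodular (u : state -> R) : Prop := {
  ms_axis : forall b, u (O, b) = 0;
  ms_incr : forall a b, u (a, b) <= u (S a, b);
  ms_mixed_diff : forall a b, 0 <= mixed_diff u a b;
  ms_edge_convex : forall a, u (S a, O) - u (a, O) <= u (S (S a), O) - u (S a, O)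
}.

Definition linearly_bounded (u : state -> R) : Prop :=
  forall a b, 0 <= u (a, b) <= INR a + INR b.

Lemma fst_monotone_supermodular : monotone_supermodular (fun x => INR (fst x)).
Proof.
  split; intros; unfold mixed_diff; simpl fst; rewrite ?S_INR; simpl INR; lra.
Qed.

Lemma fst_linearly_bounded : linearly_bounded (fun x => INR (fst x)).
Proof. intros a b. simpl. pose proof (pos_INR a). pose proof (pos_INR b). lra. Qed.

Lemma snd_linearly_bounded : linearly_bounded (fun x => INR (snd x)).
Proof. intros a b. simpl. pose proof (pos_INR a). pose proof (pos_INR b). lra. Qed.

Lemma iter_jump_kernel_swap (al be p12 p21 : R) (k : nat) (v : state -> R) (x : state) :
  Nat.iter k (jump_kernel al be p12 p21) (fun y => v (snd y, fst y)) x =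
  Nat.iter k (jump_kernel be al p21 p12) v (snd x, fst x).
Proof.
  revert x. induction k as [|k IH]; intros x; [reflexivity|]. simpl.
  rewrite (jump_kernel_ext _ _ _ _ _ _ _ IH).
  destruct x as [[|a] [|b]]; simpl; ring.
Qed.

Section JumpKernel.
Variables al be p12 p21 : R.
Hypotheses (hal : 0 <= al) (hbe : 0 <= be) (habe : al + be = 1)
  (hp12 : 0 <= p12 <= 1) (hp21 : 0 <= p21 <= 1).

Lemma jump_kernel_monotone_supermodular (u : state -> R) :
  monotone_supermodular u -> monotone_supermodular (jump_kernel al be p12 p21 u).
Proof.
  intros [H0 H1 H2 H3]. unfold mixed_diff in *.
  assert (0 <= be * (1 - p21)) by nra. assert (0 <= be * p21) by nra.
  split.
  - intros [|b]; simpl; rewrite ?H0; ring.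
  - intros [|a] [|b]; simpl; rewrite ?H0.
    + pose proof (H1 0%nat 0%nat). rewrite H0 in *. nra.
    + pose proof (H1 0%nat b). rewrite H0 in *. nra.
    + pose proof (H1 a 0%nat). pose proof (H1 (S a) 0%nat). nra.
    + pose proof (H1 a (S b)). pose proof (H1 (S a) b). nra.
  - unfold mixed_diff. intros [|a] [|b]; simpl; rewrite ?H0.
    + pose proof (H1 0%nat 0%nat). rewrite H0 in *. nra.
    + pose proof (H2 0%nat b). rewrite !H0 in *. nra.
    + pose proof (H2 a 0%nat). pose proof (H3 a). nra.
    + pose proof (H2 a (S b)). pose proof (H2 (S a) b). nra.
  - intros [|a]; simpl; rewrite ?H0.
    + pose proof (H1 0%nat 0%nat). pose proof (H3 0%nat). rewrite H0 in *. nra.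
    + pose proof (H3 a). pose proof (H3 (S a)). nra.
Qed.

Lemma jump_kernel_linearly_bounded (u : state -> R) :
  linearly_bounded u -> linearly_bounded (jump_kernel al be p12 p21 u).
Proof.
  intros B.
  assert (0 <= be * (1 - p21)) by nra. assert (0 <= be * p21) by nra.
  assert (0 <= al * (1 - p12)) by nra. assert (0 <= al * p12) by nra.
  intros [|a] [|b]; simpl jump_kernel.
  - apply B.
  - pose proof (B 0%nat b). pose proof (B 0%nat (S b)). rewrite S_INR in *. nra.
  - pose proof (B a 0%nat). pose proof (B (S a) 0%nat). rewrite S_INR in *. nra.
  - pose proof (B a (S b)). pose proof (B (S a) b). rewrite !S_INR in *.
    pose proof (pos_INR a). pose proof (pos_INR b). nra.
Qed.

Lemma iter_jump_kernel_monotone_supermodular (k : nat) (u : state -> R) :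
  monotone_supermodular u ->
  monotone_supermodular (Nat.iter k (jump_kernel al be p12 p21) u).
Proof.
  intros Hu. induction k as [|k IH]; [exact Hu|].
  apply jump_kernel_monotone_supermodular, IH.
Qed.

Lemma iter_jump_kernel_linearly_bounded (k : nat) (u : state -> R) :
  linearly_bounded u -> linearly_bounded (Nat.iter k (jump_kernel al be p12 p21) u).
Proof.
  intros Hu. induction k as [|k IH]; [exact Hu|].
  apply jump_kernel_linearly_bounded, IH.
Qed.

End JumpKernel.

Lemma is_series_nonneg (d : nat -> R) (l : R) :
  is_series d l -> (forall n, 0 <= d n) -> 0 <= l.
Proof.
  intros H Hd. apply is_series_Reals in H.
  destruct (Rle_or_lt 0 l) as [Hl|Hl]; [exact Hl|exfalso].
  destruct (H (- l)) as [N HN]; [lra|].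
  specialize (HN N (le_n _)). pose proof (cond_pos_sum d N Hd).
  unfold Rdist in HN. apply Rabs_def2 in HN. lra.
Qed.

Lemma Series_mixed_diff_nonneg (c : nat -> R) (u : nat -> state -> R) (a b : nat) :
  (forall x, ex_series (fun k => c k * u k x)) ->
  (forall k, 0 <= c k) -> (forall k, 0 <= mixed_diff (u k) a b) ->
  0 <= mixed_diff (fun x => Series (fun k => c k * u k x)) a b.
Proof.
  intros Hex Hc Hu.
  apply (is_series_nonneg (fun k => c k * mixed_diff (u k) a b)).
  - eapply is_series_ext; [|exact (is_series_plus _ _ _ _
      (is_series_minus _ _ _ _
         (is_series_minus _ _ _ _ (Series_correct _ (Hex (S a, S b)))
                                  (Series_correct _ (Hex (S a, b))))
         (Series_correct _ (Hex (a, S b))))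
      (Series_correct _ (Hex (a, b))))].
    intros k. unfold mixed_diff, plus, opp. simpl. ring.
  - intros k. apply Rmult_le_pos; auto.
Qed.

Section Inventory.
Variables l1 l2 p12 p21 T : R.
Hypotheses (hl1 : 0 < l1) (hl2 : 0 < l2) (hp12 : 0 <= p12 <= 1) (hp21 : 0 <= p21 <= 1)
  (hT : 0 <= T).

Let hal : 0 <= l1 / (l1 + l2).
Proof. apply Rdiv_le_0_compat; lra. Qed.

Let hbe : 0 <= l2 / (l1 + l2).
Proof. apply Rdiv_le_0_compat; lra. Qed.

Let habe : l1 / (l1 + l2) + l2 / (l1 + l2) = 1.
Proof. field. lra. Qed.

Lemma iter_unif_kernel_Rabs_le (f : state -> R) (k a b : nat) :
  linearly_bounded f ->
  Rabs (Nat.iter k (unif_kernel l1 l2 p12 p21) f (a, b)) <= INR a + INR b.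
Proof.
  intros Hf.
  destruct (iter_jump_kernel_linearly_bounded _ _ _ _ hal hbe habe hp12 hp21 k f Hf a b).
  rewrite Rabs_right; lra.
Qed.

Lemma unif_series_supermodular (f : state -> R) (Q1 Q2 : nat) :
  linearly_bounded f ->
  (forall k, 0 <= mixed_diff (Nat.iter k (unif_kernel l1 l2 p12 p21) f) Q1 Q2) ->
  0 <= mixed_diff (unif_series l1 l2 p12 p21 T f) Q1 Q2.
Proof.
  intros Hf Hk. apply Series_mixed_diff_nonneg; [|intros; apply exp_coef_nonneg; nra|exact Hk].
  intros [a b]. apply ex_series_Rabs, (ex_series_exp_bounded _ (INR a + INR b)); [nra|].
  intros k. apply iter_unif_kernel_Rabs_le, Hf.
Qed.

Lemma iter_unif_kernel_fst_supermodular (k Q1 Q2 : nat) :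
  0 <= mixed_diff (Nat.iter k (unif_kernel l1 l2 p12 p21) (fun x => INR (fst x))) Q1 Q2.
Proof.
  apply ms_mixed_diff, iter_jump_kernel_monotone_supermodular, fst_monotone_supermodular;
    assumption.
Qed.

(* Exchanging the two products turns [n2] into [n1]. *)
Lemma iter_unif_kernel_snd_supermodular (k Q1 Q2 : nat) :
  0 <= mixed_diff (Nat.iter k (unif_kernel l1 l2 p12 p21) (fun x => INR (snd x))) Q1 Q2.
Proof.
  assert (Hswap : forall x,
    Nat.iter k (unif_kernel l1 l2 p12 p21) (fun y => INR (snd y)) x =
    Nat.iter k (jump_kernel (l2 / (l1 + l2)) (l1 / (l1 + l2)) p21 p12)
      (fun y => INR (fst y)) (snd x, fst x))
    by exact (fun x => iter_jump_kernel_swap _ _ _ _ k (fun y => INR (fst y)) x).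
  pose proof (ms_mixed_diff _ (iter_jump_kernel_monotone_supermodular _ _ p21 _
    hbe hal hp12 k _ fst_monotone_supermodular) Q2 Q1) as H.
  rewrite <- mixed_diff_swap in H. unfold mixed_diff in *. rewrite !Hswap. exact H.
Qed.

Lemma E_n1_unif (Q1 Q2 : nat) :
  E_n1 l1 l2 p12 p21 Q1 Q2 T =
  exp (- ((l1 + l2) * T)) * unif_series l1 l2 p12 p21 T (fun x => INR (fst x)) (Q1, Q2).
Proof.
  apply box_expectation_unif with (C := INR Q1 + INR Q2); try assumption.
  intros k. apply iter_unif_kernel_Rabs_le, fst_linearly_bounded.
Qed.

Lemma E_n2_unif (Q1 Q2 : nat) :
  E_n2 l1 l2 p12 p21 Q1 Q2 T =
  exp (- ((l1 + l2) * T)) * unif_series l1 l2 p12 p21 T (fun x => INR (snd x)) (Q1, Q2).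
Proof.
  apply box_expectation_unif with (C := INR Q1 + INR Q2); try assumption.
  intros k. apply iter_unif_kernel_Rabs_le, snd_linearly_bounded.
Qed.

Lemma E_n1_supermodular (Q1 Q2 : nat) :
  0 <= mixed_diff (fun x => E_n1 l1 l2 p12 p21 (fst x) (snd x) T) Q1 Q2.
Proof.
  pose proof (exp_pos (- ((l1 + l2) * T))).
  pose proof (unif_series_supermodular _ Q1 Q2 fst_linearly_bounded
                (fun k => iter_unif_kernel_fst_supermodular k Q1 Q2)).
  unfold mixed_diff in *. simpl fst; simpl snd. rewrite !E_n1_unif. nra.
Qed.

Lemma E_n2_supermodular (Q1 Q2 : nat) :
  0 <= mixed_diff (fun x => E_n2 l1 l2 p12 p21 (fst x) (snd x) T) Q1 Q2.
Proof.
  pose proof (exp_pos (- ((l1 + l2) * T))).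
  pose proof (unif_series_supermodular _ Q1 Q2 snd_linearly_bounded
                (fun k => iter_unif_kernel_snd_supermodular k Q1 Q2)).
  unfold mixed_diff in *. simpl fst; simpl snd. rewrite !E_n2_unif. nra.
Qed.

End Inventory.

Lemma pi1_mixed_diff (T l1 l2 p12 p21 r1 r2 c1 c2 h1 h2 : R) (Q1 Q2 : nat) :
  T <> 0 ->
  mixed_diff (fun x => pi1 T l1 l2 p12 p21 r1 r2 c1 c2 h1 h2 (fst x) (snd x)) Q1 Q2 =
  - / T * ((r1 + h1) * mixed_diff (fun x => E_n1 l1 l2 p12 p21 (fst x) (snd x) T) Q1 Q2 +
           (r2 + h2) * mixed_diff (fun x => E_n2 l1 l2 p12 p21 (fst x) (snd x) T) Q1 Q2).
Proof.
  intros hT. unfold mixed_diff, pi1. simpl fst; simpl snd. rewrite !S_INR.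
  field. exact hT.
Qed.

Theorem theorem2 (T l1 l2 p12 p21 r1 r2 c1 c2 h1 h2 : R)
  (hT : 0 < T) (hl1 : 0 < l1) (hl2 : 0 < l2)
  (hp12 : 0 <= p12 <= 1) (hp21 : 0 <= p21 <= 1)
  (hr1 : 0 <= r1) (hr2 : 0 <= r2) (hh1 : 0 <= h1) (hh2 : 0 <= h2) :
  forall Q1 Q2 : nat,
    pi1 T l1 l2 p12 p21 r1 r2 c1 c2 h1 h2 (S Q1) (S Q2)
    - pi1 T l1 l2 p12 p21 r1 r2 c1 c2 h1 h2 (S Q1) Q2
    - pi1 T l1 l2 p12 p21 r1 r2 c1 c2 h1 h2 Q1 (S Q2)
    + pi1 T l1 l2 p12 p21 r1 r2 c1 c2 h1 h2 Q1 Q2 <= 0.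
Proof.
  intros Q1 Q2.
  change (mixed_diff (fun x => pi1 T l1 l2 p12 p21 r1 r2 c1 c2 h1 h2 (fst x) (snd x))
            Q1 Q2 <= 0).
  rewrite pi1_mixed_diff by lra.
  pose proof (E_n1_supermodular l1 l2 p12 p21 T hl1 hl2 hp12 hp21 (Rlt_le _ _ hT) Q1 Q2).
  pose proof (E_n2_supermodular l1 l2 p12 p21 T hl1 hl2 hp12 hp21 (Rlt_le _ _ hT) Q1 Q2).
  assert (0 < / T) by (apply Rinv_0_lt_compat; exact hT).
  assert (0 <= (r1 + h1) * mixed_diff (fun x => E_n1 l1 l2 p12 p21 (fst x) (snd x) T) Q1 Q2 +
               (r2 + h2) * mixed_diff (fun x => E_n2 l1 l2 p12 p21 (fst x) (snd x) T) Q1 Q2)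
    by (apply Rplus_le_le_0_compat; apply Rmult_le_pos; lra).
  nra.
Qed.
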